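(* Under the standing assumptions, the following are equivalent: (i) there exists $\mathbf c\in\mathbb R^n$ with all $c_j>0$, $c_1=1$ and $\mathbf c^T(I-M_0)>\mathbf 0^T$ (componentwise strict), i.e. the value-feasible domain $\Theta^{val}$ has nonempty interior; (ii) $\lambda_{\max}(M_0)<1$; (iii) $\lambda_{\max}(\tilde A+BL)<1$. Moreover, with non-strict inequalities: $\Theta^{val}\neq\emptyset$ $\iff$ $\lambda_{\max}(M_0)\le 1$ $\iff$ $\lambda_{\max}(\tilde A+BL)\le 1$.
   Context: Fix $n\ge 2$. $A$ and $K$ are $n\times n$ entrywise nonnegative real matrices; $\delta_1,\dots,\delta_n\in(0,1]$, $D=K\,\mathrm{diag}(\delta_1,\dots,\delta_n)$, and $\tilde A=A+D$. $L=\mathrm{diag}(l_1,\dots,l_n)$ with all $l_j>0$. $B$ is an $n\times n$ entrywise nonnegative matrix with no zero column. Standing assumption: $\tilde A$ is irreducible and $\lambda_{\max}(\tilde A)<1$, where $\lambda_{\max}(X)$ denotes the spectral radius of a square matrix $X$. $M_0:=L(I-\tilde A)^{-1}B$. Vector inequalities are componentwise. The value-feasible domain is $\Theta^{val}:=\{\mathbf c\in\mathbb R^n:\ c_j>0\ \forall j,\ c_1=1,\ \mathbf c^T(I-M_0)\ge \mathbf 0^T\}$. *)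

From HB Require Import structures.
From mathcomp Require Import all_boot all_order all_algebra.
From mathcomp Require Import complex.
Set Implicit Arguments. Unset Strict Implicit. Unset Printing Implicit Defensive.
Import Order.TTheory GRing.Theory Num.Theory.
Local Open Scope ring_scope.

Section Defs.
Variable R : rcfType.

Definition nonneg_mx m n (X : 'M[R]_(m, n)) : Prop := forall i j, 0 <= X i j.

Definition irreducible_mx n (X : 'M[R]_n) : Prop :=
  forall i j : 'I_n, connect (fun a b => 0 < X a b) i j.

(* the (multiset of) eigenvalues of a real square matrix, as complex numbers:
   the roots of its characteristic polynomial over R[i] *)
Definition eigenvalues_C n (X : 'M[R]_n) : seq R[i] :=
  proj1_sig (closed_field_poly_normal (char_poly (map_mx (real_complex R) X))).

Definition spectral_radius n (X : 'M[R]_n) : R :=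
  \big[Num.max/0]_(z <- eigenvalues_C X) Normc.normc z.

Definition no_zero_column m n (X : 'M[R]_(m, n)) : Prop :=
  forall j, exists i, X i j != 0.

End Defs.

From HB Require Import structures.
From mathcomp Require Import all_boot all_order all_algebra.
From mathcomp Require Import complex polyrcf lra.
Import Order.TTheory GRing.Theory Num.Theory.
Local Open Scope ring_scope.

(* Both chains of equivalences are Perron-Frobenius arguments on sub-invariant
   row vectors.  By the Collatz-Wielandt bound, a positive y with y N < s y
   (resp. <=) forces rho(N) < s (resp. <=).  Conversely, rho(N) < s makes s I - N
   an M-matrix, whose inverse is nonnegative, so y := 1 (s I - N)^-1 works;
   rho(N) <= s yields a nonzero nonnegative y with y N <= s y, the value at s of
   the adjugate column of t I - N after cancelling the largest power of (X - s)
   dividing it; for irreducible N such a y is positive.  With N := At + B L and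
   X := (I - At)^-1 >= I, the identities
     (y B) (I - M0) = y (I - N) X B,      (z L X) (I - N) = z (I - M0) L
   carry sub-invariant vectors between M0 and N, keeping them positive since B
   has no zero column and the entries of l are positive. *)

Section SpectralRadius.
Context {R : rcfType}.
Local Notation toC := (real_complex R).
Local Notation normc := Normc.normc.

Lemma mem_eigenvalues_C {n} (X : 'M[R]_n) z :
  (z \in eigenvalues_C X) = root (char_poly (map_mx toC X)) z.
Proof.
rewrite /eigenvalues_C; case: closed_field_poly_normal => s /= ->.
by rewrite (monicP (char_poly_monic _)) scale1r root_prod_XsubC.
Qed.

Lemma char_poly_trmx (F : comNzRingType) n (X : 'M[F]_n) :
  char_poly X^T = char_poly X.
Proof.
rewrite /char_poly -det_tr; congr (\det _).
by apply/matrixP => i j; rewrite !mxE eq_sym.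
Qed.

Lemma normcE (z : R[i]) : `|z| = (normc z)%:C%C.
Proof. by case: z. Qed.

Lemma normc_real (t : R) : normc t%:C%C = `|t|.
Proof. by rewrite /Normc.normc /= expr0n /= addr0 sqrtr_sqr. Qed.

Lemma spectral_radius_ge0 {n} (X : 'M[R]_n) : 0 <= spectral_radius X.
Proof. exact: bigmax_ge_id. Qed.

Lemma root_char_poly_le_spectral_radius {n} (X : 'M[R]_n) t :
  root (char_poly X) t -> `|t| <= spectral_radius X.
Proof.
move=> rt; rewrite -normc_real; apply: le_bigmax_seq => //.
by rewrite mem_eigenvalues_C -map_char_poly fmorph_root.
Qed.

Lemma spectral_radius_lt_no_root {n} (X : 'M[R]_n) u t :
  spectral_radius X < u -> u <= t -> ~~ root (char_poly X) t.
Proof.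
move=> ltXu leut; apply/negP => /root_char_poly_le_spectral_radius.
by rewrite leNgt (lt_le_trans ltXu) // (le_trans leut) // ler_norm.
Qed.

Lemma spectral_radius_le_no_root {n} (X : 'M[R]_n) s t :
  spectral_radius X <= s -> s < t -> ~~ root (char_poly X) t.
Proof.
move=> leXs ltst; apply/negP => /root_char_poly_le_spectral_radius.
by rewrite leNgt (le_lt_trans leXs) // (lt_le_trans ltst) // ler_norm.
Qed.

Lemma eigenvalue_subeigenvector {n} (N : 'M[R]_n) z :
  nonneg_mx N -> z \in eigenvalues_C N ->
  exists2 w : 'cV[R]_n, (forall i, 0 <= w i 0) /\ (exists i, 0 < w i 0) &
    forall i, normc z * w i 0 <= (N *m w) i 0.
Proof.
rewrite mem_eigenvalues_C -char_poly_trmx -eigenvalue_root_char map_trmx.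
move=> N0 /eigenvalueP[v vE v_neq0].
exists (\col_i normc (v 0 i)); first split=> [i|].
- by rewrite mxE -(@lecR R) -normcE normr_ge0.
- have [i vi_neq0] : exists i, v 0 i != 0.
    by apply/existsP; apply: contraNT v_neq0 => /existsPn vi0;
      apply/eqP/rowP => i; rewrite mxE; apply/eqP/negPn/vi0.
  by exists i; rewrite mxE -(@ltcR R) -normcE normr_gt0.
move=> i; rewrite -(@lecR R) rmorphM /= !mxE -!normcE rmorph_sum /= -normrM.
have /rowP/(_ i) := vE; rewrite !mxE => <-.
apply: le_trans (ler_norm_sum _ _ _) _; apply: ler_sum => j _.
by rewrite !mxE normrM mulrC rmorphM /= -normcE [`|_%:C%C|]ger0_norm ?ler0c.
Qed.

Lemma collatz_wielandt_le {n} {N : 'M[R]_n} {y : 'rV[R]_n} {s : R} :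
  nonneg_mx N -> (forall j, 0 < y 0 j) -> 0 <= s ->
  (forall j, (y *m N) 0 j <= s * y 0 j) -> spectral_radius N <= s.
Proof.
move=> N0 y_gt0 s_ge0 yN_le; rewrite /spectral_radius big_seq; apply: bigmax_le => // z.
case/(eigenvalue_subeigenvector N z N0) => w [w_ge0 [i wi_gt0]] Nw_ge.
have yw_gt0 : 0 < (y *m w) 0 0.
  rewrite mxE (bigD1 i) //=; apply: ltr_wpDr; last exact: mulr_gt0.
  by apply: sumr_ge0 => k _; rewrite mulr_ge0 // ltW.
rewrite -(ler_pM2r yw_gt0); apply: (@le_trans _ _ ((y *m N *m w) 0 0)).
  rewrite -mulmxA !mxE mulr_sumr; apply: ler_sum => k _.
  by rewrite mulrCA; apply: ler_wpM2l; [exact: ltW | exact: Nw_ge].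
rewrite [X in X <= _]mxE [(y *m w) 0 0]mxE mulr_sumr; apply: ler_sum => k _.
by rewrite mulrA; apply: ler_wpM2r; [exact: w_ge0 | exact: yN_le].
Qed.

Lemma collatz_wielandt_lt {n} {N : 'M[R]_n} {y : 'rV[R]_n} {s : R} :
  nonneg_mx N -> (forall j, 0 < y 0 j) -> 0 < s ->
  (forall j, (y *m N) 0 j < s * y 0 j) -> spectral_radius N < s.
Proof.
move=> N0 y_gt0 s_gt0 yN_lt.
pose s' := \big[Num.max/0]_j ((y *m N) 0 j / y 0 j).
apply: (@le_lt_trans _ _ s').
  apply: (collatz_wielandt_le N0 y_gt0) => [|j].
    exact: bigmax_ge_id.
  by rewrite -ler_pdivrMr //; apply: le_bigmax.
by apply: bigmax_lt => // j _; rewrite ltr_pdivrMr.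
Qed.

End SpectralRadius.

Section NonnegMatrices.
Context {R : rcfType}.

Lemma nonneg_mx_add {m k} {A B : 'M[R]_(m, k)} :
  nonneg_mx A -> nonneg_mx B -> nonneg_mx (A + B).
Proof. by move=> A0 B0 i j; rewrite mxE addr_ge0. Qed.

Lemma nonneg_mx_mul {m k p} {A : 'M[R]_(m, k)} {B : 'M[R]_(k, p)} :
  nonneg_mx A -> nonneg_mx B -> nonneg_mx (A *m B).
Proof. by move=> A0 B0 i j; rewrite mxE sumr_ge0 // => l _; rewrite mulr_ge0. Qed.

Lemma nonneg_diag_mx {n} {d : 'rV[R]_n} :
  (forall j, 0 <= d 0 j) -> nonneg_mx (diag_mx d).
Proof. by move=> d0 i j; rewrite mxE mulrn_wge0. Qed.

Lemma nonneg_mx_row {n} {y : 'rV[R]_n} : (forall j, 0 <= y 0 j) -> nonneg_mx y.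
Proof. by move=> y0 i j; rewrite ord1. Qed.

Lemma mulmx_subr_scalar_row {n} (N : 'M[R]_n) s (y : 'rV[R]_n) j :
  (y *m (s%:M - N)) 0 j = s * y 0 j - (y *m N) 0 j.
Proof. by rewrite mulmxBr mul_mx_scalar !mxE mulrC. Qed.

Lemma mulmx_row_gt0 {n} (B : 'M[R]_n) (w : 'rV[R]_n) :
  nonneg_mx B -> no_zero_column B -> (forall i, 0 < w 0 i) ->
  forall j, 0 < (w *m B) 0 j.
Proof.
move=> B0 B_col w_gt0 j; have [i Bij] := B_col j.
rewrite mxE (bigD1 i) //=; apply: ltr_wpDr; last by rewrite mulr_gt0 // lt_def Bij B0.
by apply: sumr_ge0 => k _; rewrite mulr_ge0 // ltW.
Qed.

Lemma irreducible_mx_add {n} (A E : 'M[R]_n) :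
  irreducible_mx A -> nonneg_mx E -> irreducible_mx (A + E).
Proof.
move=> A_irr E0 i j; apply: connect_sub (A_irr i j) => a b Aab_gt0; apply: connect1.
by rewrite mxE ltr_wpDr.
Qed.

Lemma irreducible_subinvariant_gt0 {n} (N : 'M[R]_n) (y : 'rV[R]_n) s :
  nonneg_mx N -> irreducible_mx N -> (forall j, 0 <= y 0 j) ->
  (exists i, 0 < y 0 i) -> (forall j, (y *m N) 0 j <= s * y 0 j) ->
  forall j, 0 < y 0 j.
Proof.
move=> N0 N_irr y_ge0 [i yi_gt0] yN_le j.
have /connectP[p N_path ->] := N_irr i j.
elim: p i yi_gt0 N_path => [|b p IHp] a ya_gt0 //= /andP[Nab_gt0 N_path].
apply: IHp N_path; rewrite lt_def y_ge0 andbT; apply/eqP => yb0.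
have : 0 < (y *m N) 0 b.
  rewrite mxE (bigD1 a) //=; apply: ltr_wpDr; last exact: mulr_gt0.
  by apply: sumr_ge0 => k _; rewrite mulr_ge0.
by rewrite ltNge (le_trans (yN_le b)) // yb0 mulr0.
Qed.

End NonnegMatrices.

Section PolyPositivity.
Context {R : rcfType}.
Implicit Types (f : {poly R}) (a b c s : R).

Lemma poly_ge0_of_noroot_itv f c b : c <= b -> 0 < f.[b] ->
  {in `]c, b[, forall x, ~~ root f x} -> 0 <= f.[c].
Proof.
move=> lecb fb_gt0 noroot_f; rewrite leNgt; apply/negP => fc_lt0.
have : f.[c] * f.[b] < 0 by rewrite pmulr_llt0.
case/(poly_ivtoo lecb) => x x_in /rootP fx0.
by move: (noroot_f x x_in); rewrite rootE fx0 eqxx.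
Qed.

Lemma poly_ge0_of_gt0_right f s : (forall t, s < t -> 0 < f.[t]) -> 0 <= f.[s].
Proof.
move=> f_gt0; apply: (@poly_ge0_of_noroot_itv _ _ (s + 1)).
- by rewrite lerDl.
- by rewrite f_gt0 // ltrDl.
by move=> x /andP[sx _]; rewrite rootE gt_eqF // f_gt0.
Qed.

Lemma monic_gt0_above_roots f a : f \is monic ->
  (forall t, a <= t -> ~~ root f t) -> 0 < f.[a].
Proof.
move=> /monicP f_monic noroot_f.
have noroot_itv : {in `[a, +oo[, forall t, ~~ root f t}.
  by move=> t; rewrite in_itv andbT; exact: noroot_f.
have := sgp_pinftyP noroot_itv; rewrite /sgp_pinfty f_monic sgr1 => /(_ a).
by rewrite in_itv /= lexx => /(_ isT) /eqP; rewrite sgr_cp0.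
Qed.

Lemma poly_family_gt0_continuation k (f : 'I_k -> {poly R}) a b : a <= b ->
  (forall i, 0 < (f i).[b]) ->
  (forall x, a <= x <= b -> (forall i, 0 <= (f i).[x]) -> forall i, 0 < (f i).[x]) ->
  forall i, 0 < (f i).[a].
Proof.
move=> leab fb_gt0 f_gt0_of_ge0; pose Q := \prod_i f i.
have Q_gt0 x : (forall i, 0 < (f i).[x]) -> 0 < Q.[x].
  by move=> fx_gt0; rewrite horner_prod prodr_gt0.
have gt0_at x : a <= x <= b -> {in `]x, b[, forall y, ~~ root Q y} ->
    forall i, 0 < (f i).[x].
  move=> x_in noroot_Q; apply: f_gt0_of_ge0 => // i.
  apply: poly_ge0_of_noroot_itv (fb_gt0 i) _; first by case/andP: x_in.
  move=> y /noroot_Q; apply: contra; rewrite !rootE horner_prod => fy0.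
  by apply/prodf_eq0; exists i.
(* Go down from b to the largest root of Q in ]a, b[, if any. *)
case: (prev_rootP Q a b) => [Q0 | y _ Qy y_in noroot_Q | c _ _ noroot_Q].
- by move: (Q_gt0 _ fb_gt0); rewrite Q0 horner0 ltxx.
- have y_ab : a <= y <= b by move: y_in; rewrite in_itv /= => /andP[ay yb]; rewrite !ltW.
  by move: (Q_gt0 _ (gt0_at y y_ab noroot_Q)); rewrite Qy ltxx.
- by apply: gt0_at noroot_Q; rewrite lexx.
Qed.

End PolyPositivity.

Lemma mulmx_adj_const (F : comNzRingType) m (A : 'M[F]_m) :
  A *m (\adj A *m const_mx 1) = const_mx (\det A) :> 'cV_m.
Proof.
by rewrite mulmxA mul_mx_adj mul_scalar_mx; apply/matrixP => i j; rewrite !mxE mulr1.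
Qed.

Section MMatrix.
Context {R : rcfType} {n : nat}.
Implicit Types (N : 'M[R]_n) (p v : 'cV[R]_n).

Lemma mulmx_subr_scalar_col N u v i :
  ((u%:M - N) *m v) i 0 = u * v i 0 - (N *m v) i 0.
Proof. by rewrite mulmxBl mul_scalar_mx !mxE. Qed.

Lemma M_matrix_monotone N u p v : nonneg_mx N ->
  (forall i, 0 < p i 0) -> (forall i, 0 < ((u%:M - N) *m p) i 0) ->
  (forall i, 0 <= ((u%:M - N) *m v) i 0) -> forall i, 0 <= v i 0.
Proof.
move=> N0 p_gt0 Ap_gt0 Av_ge0.
(* Minimum principle: at an index m minimising v / p, the vector
   w := v - (v_m / p_m) p is nonnegative with w_m = 0, so ((u I - N) w)_m <= 0. *)
case: (pickP (fun i => v i 0 < 0)) => [k vk_lt0 | v_ge0]; last first.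
  by move=> i; rewrite leNgt v_ge0.
pose ratio i := v i 0 / p i 0.
have [m _ ratio_min] := @arg_minP _ _ _ k xpredT ratio isT.
have ratio_m_lt0 : ratio m < 0.
  by apply: le_lt_trans (ratio_min k isT) _; rewrite pmulr_llt0 ?invr_gt0.
pose w := v - ratio m *: p.
have w_ge0 j : 0 <= w j 0.
  by rewrite !mxE subr_ge0 -ler_pdivlMr //; exact: ratio_min.
have wm0 : w m 0 = 0 by rewrite !mxE /ratio divfK ?subrr // gt_eqF.
have Aw_le0 : ((u%:M - N) *m w) m 0 <= 0.
  rewrite mulmx_subr_scalar_col wm0 mulr0 sub0r oppr_le0 mxE.
  by apply: sumr_ge0 => j _; rewrite mulr_ge0.
have Aw_gt0 : 0 < ((u%:M - N) *m w) m 0.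
  have -> : ((u%:M - N) *m w) m 0 =
            ((u%:M - N) *m v) m 0 - ratio m * ((u%:M - N) *m p) m 0.
    by rewrite mulmxBr -scalemxAr !mxE.
  rewrite subr_gt0; apply: (@lt_le_trans _ _ 0); last exact: Av_ge0.
  by rewrite pmulr_llt0.
by move: (lt_le_trans Aw_gt0 Aw_le0); rewrite ltxx.
Qed.

Definition adj_col N u : 'cV[R]_n := \adj (u%:M - N) *m const_mx 1.

Lemma adj_col_gt0 N u : nonneg_mx N -> 0 < u -> 0 < \det (u%:M - N) ->
  (forall i, 0 <= adj_col N u i 0) -> forall i, 0 < adj_col N u i 0.
Proof.
move=> N0 u_gt0 det_gt0 a_ge0 i; rewrite -(pmulr_rgt0 _ u_gt0).
have := @mulmx_adj_const _ _ (u%:M - N); move/matrixP/(_ i 0).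
rewrite -/(adj_col N u) mulmx_subr_scalar_col mxE => /eqP; rewrite subr_eq => /eqP ->.
apply: ltr_wpDr; last by rewrite mxE.
by rewrite mxE; apply: sumr_ge0 => j _; rewrite mulr_ge0.
Qed.

Lemma adj_col_ge0_large N u : nonneg_mx N -> \sum_i \sum_j N i j < u ->
  0 <= \det (u%:M - N) -> forall i, 0 <= adj_col N u i 0.
Proof.
move=> N0 sumN_lt det_ge0; apply: (@M_matrix_monotone N u (const_mx 1)) => // i.
- by rewrite mxE.
- rewrite mulmx_subr_scalar_col mxE mulr1 subr_gt0; apply: le_lt_trans sumN_lt.
  rewrite mxE (eq_bigr (fun j => N i j)) => [|j _]; last by rewrite mxE mulr1.
  rewrite [X in _ <= X](bigD1 i) //= lerDl.
  by apply: sumr_ge0 => k _; apply: sumr_ge0.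
by rewrite mulmx_adj_const mxE.
Qed.

Definition char_adj_col N : 'cV[{poly R}]_n := \adj (char_poly_mx N) *m const_mx 1.

Lemma horner_char_poly_mx N u :
  map_mx (horner_eval u) (char_poly_mx N) = u%:M - N.
Proof.
apply/matrixP => i j.
by rewrite !mxE horner_evalE hornerD hornerN hornerMn hornerX hornerC.
Qed.

Lemma horner_char_poly N u : (char_poly N).[u] = \det (u%:M - N).
Proof. by rewrite -horner_char_poly_mx det_map_mx. Qed.

Lemma horner_char_adj_col N u i : (char_adj_col N i 0).[u] = adj_col N u i 0.
Proof.
rewrite -horner_evalE /adj_col -horner_char_poly_mx -map_mx_adj.
have -> : const_mx 1 = map_mx (horner_eval u) (const_mx 1) :> 'cV_n.
  by apply/matrixP => a b; rewrite !mxE rmorph1.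
by rewrite -map_mxM [RHS]mxE.
Qed.

Lemma adj_col_gt0_above_roots N u : nonneg_mx N -> 0 < u ->
  (forall t, u <= t -> ~~ root (char_poly N) t) ->
  0 < \det (u%:M - N) /\ forall i, 0 < adj_col N u i 0.
Proof.
move=> N0 u_gt0 noroot_N.
have det_gt0 t : u <= t -> 0 < \det (t%:M - N).
  move=> ut; rewrite -horner_char_poly; apply: monic_gt0_above_roots.
    exact: char_poly_monic.
  by move=> t' tt'; apply: noroot_N (le_trans ut tt').
split=> [|i]; first exact: det_gt0.
(* u I - N is diagonally dominant beyond T; below T, an entry of the adjugate
   column could only vanish after being nonnegative, which adj_col_gt0 excludes. *)
pose T := Num.max u (1 + \sum_i \sum_j N i j).
have uT : u <= T by rewrite le_max lexx.
rewrite -horner_char_adj_col.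
apply: (@poly_family_gt0_continuation _ _ (fun i => char_adj_col N i 0) u T) => //.
  move=> k; rewrite horner_char_adj_col; apply: adj_col_gt0 => //.
  - exact: lt_le_trans uT.
  - exact: det_gt0.
  apply: adj_col_ge0_large => //; last exact/ltW/det_gt0.
  by rewrite lt_max ltrDr ltr01 orbT.
move=> x /andP[ux _] adj_ge0 k; rewrite horner_char_adj_col.
apply: adj_col_gt0 => //; first exact: lt_le_trans ux.
  exact: det_gt0.
by move=> j; rewrite -horner_char_adj_col.
Qed.

Lemma M_matrix_inv_ge0 N u : nonneg_mx N -> 0 < u ->
  (forall t, u <= t -> ~~ root (char_poly N) t) ->
  (u%:M - N) \in unitmx /\ nonneg_mx (invmx (u%:M - N)).
Proof.
move=> N0 u_gt0 noroot_N.
have [det_gt0 adj_gt0] := adj_col_gt0_above_roots N u N0 u_gt0 noroot_N.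
have unit_uN : (u%:M - N) \in unitmx by rewrite unitmxE unitfE gt_eqF.
split=> // i j.
have := @M_matrix_monotone N u (adj_col N u) (col j (invmx (u%:M - N))) N0 adj_gt0.
move=> /(_ _ _ i); rewrite mxE; apply=> k.
  by rewrite mulmx_adj_const mxE.
by rewrite colE mulmxA mulmxV // mul1mx mxE ler0n.
Qed.

End MMatrix.

Lemma spectral_radius_lt_inv_ge0 {R : rcfType} {n} {N : 'M[R]_n} {u : R} :
  nonneg_mx N -> spectral_radius N < u ->
  (u%:M - N) \in unitmx /\ nonneg_mx (invmx (u%:M - N)).
Proof.
move=> N0 ltNu; apply: M_matrix_inv_ge0 => // [|t].
  exact: le_lt_trans (spectral_radius_ge0 N) ltNu.
exact: spectral_radius_lt_no_root.
Qed.

Section WeakPerronVector.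
Context {R : rcfType}.

Lemma common_root_factor {k} (i0 : 'I_k) (q : 'I_k -> {poly R}) s :
  (forall i, q i != 0) ->
  exists m, (forall i, ('X - s%:P) ^+ m %| q i) /\
            exists i, ~~ root (q i %/ ('X - s%:P) ^+ m) s.
Proof.
move=> q_neq0.
have [k0 _ mu_min] := @arg_minnP _ i0 xpredT (fun i => mup s (q i)) isT.
exists (mup s (q k0)); split=> [i|]; first by rewrite -mup_geq // mu_min.
exists k0; apply/negP => root_div; set m := mup s (q k0) in root_div *.
have : ('X - s%:P) ^+ m.+1 %| q k0.
  have D_dvd : ('X - s%:P) ^+ m %| q k0 by rewrite -mup_geq.
  rewrite exprS -(divpK D_dvd) dvdp_mul2r ?dvdp_XsubCl //.
  by rewrite expf_neq0 // polyXsubC_eq0.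
by rewrite -mup_geq // ltnn.
Qed.

Lemma mulmx_col_divp {k} (i0 : 'I_k) {P : 'M[{poly R}]_k} {q : 'cV_k} {c D} :
  D != 0 -> (forall i, D %| q i 0) -> P *m q = const_mx c ->
  exists2 h, h * D = c & P *m \col_i (q i 0 %/ D) = const_mx h.
Proof.
move=> D_neq0 D_dvd Pq.
have PrD i : (P *m \col_i (q i 0 %/ D)) i 0 * D = c.
  have -> : c = (P *m q) i 0 by rewrite Pq mxE.
  by rewrite !mxE mulr_suml; apply: eq_bigr => j _; rewrite mxE -mulrA divpK.
exists ((P *m \col_i (q i 0 %/ D)) i0 0); first exact: PrD.
by apply/matrixP => i j; rewrite ord1 [RHS]mxE; apply: (mulIf D_neq0); rewrite !PrD.
Qed.

Lemma subeigenvector_of_noroot {n} (N : 'M[R]_n) s (i0 : 'I_n) :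
  nonneg_mx N -> 0 < s -> (forall t, s < t -> ~~ root (char_poly N) t) ->
  exists z : 'cV[R]_n, [/\ forall i, 0 <= z i 0, exists i, 0 < z i 0 &
                           forall i, (N *m z) i 0 <= s * z i 0].
Proof.
move=> N0 s_gt0 noroot_N.
have gt0_right t : s < t -> 0 < \det (t%:M - N) /\ forall i, 0 < adj_col N t i 0.
  move=> st; apply: adj_col_gt0_above_roots => // [|t' tt'].
    exact: lt_trans st.
  exact: noroot_N (lt_le_trans st tt').
have s_lt : s < s + 1 by rewrite ltrDl.
pose q := char_adj_col N.
have q_neq0 i : q i 0 != 0.
  apply/eqP => qi0; have := (gt0_right _ s_lt).2 i.
  by rewrite -horner_char_adj_col -/q qi0 horner0 ltxx.
have [m [D_dvd [k0 r_k0]]] := common_root_factor i0 (fun i => q i 0) s q_neq0.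
set D := ('X - s%:P) ^+ m in D_dvd r_k0.
have D_neq0 : D != 0 by rewrite expf_neq0 // polyXsubC_eq0.
have D_gt0 t : s < t -> 0 < D.[t].
  by move=> st; rewrite horner_exp hornerXsubC exprn_gt0 // subr_gt0.
have [h hD cp_r] :=
  mulmx_col_divp i0 D_neq0 D_dvd (@mulmx_adj_const _ _ (char_poly_mx N)).
set r := \col_i _ in cp_r.
have rD i : r i 0 * D = q i 0 by rewrite mxE divpK.
have ge0_at_s (f : {poly R}) : (forall t, s < t -> 0 < (f * D).[t]) -> 0 <= f.[s].
  move=> fD_gt0; apply: poly_ge0_of_gt0_right => t st.
  by have := fD_gt0 t st; rewrite hornerM pmulr_lgt0 // D_gt0.
pose z := map_mx (horner_eval s) r.
have z_ge0 i : 0 <= z i 0.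
  rewrite mxE horner_evalE; apply: ge0_at_s => t st.
  by rewrite rD horner_char_adj_col; exact: (gt0_right t st).2.
exists z; split=> // [|i].
  by exists k0; rewrite lt_def z_ge0 andbT [z _ _]mxE [r _ _]mxE horner_evalE -rootE.
rewrite -subr_ge0 -mulmx_subr_scalar_col -horner_char_poly_mx -map_mxM cp_r !mxE.
apply: ge0_at_s => t st.
by rewrite hD horner_char_poly; exact: (gt0_right t st).1.
Qed.

Lemma exists_subinvariant_of_spectral_radius_le {n} {N : 'M[R]_n} {s : R} (i0 : 'I_n) :
  nonneg_mx N -> 0 < s -> spectral_radius N <= s ->
  exists y : 'rV[R]_n, [/\ forall j, 0 <= y 0 j, exists j, 0 < y 0 j &
                          forall j, 0 <= (y *m (s%:M - N)) 0 j].
Proof.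
move=> N0 s_gt0 leNs.
have [|||z [z_ge0 z_neq0 Nz_le]] := @subeigenvector_of_noroot _ N^T s i0 => //.
- by move=> i j; rewrite mxE.
- by move=> t; rewrite char_poly_trmx; apply: spectral_radius_le_no_root.
exists z^T; split=> [j||j].
- by rewrite mxE.
- by case: z_neq0 => i zi_gt0; exists i; rewrite mxE.
rewrite mulmx_subr_scalar_row subr_ge0.
by move: (Nz_le j); rewrite -[_ *m N]trmxK trmx_mul trmxK !mxE.
Qed.

End WeakPerronVector.

Section SubinvariantVectors.
Context {R : rcfType} {n : nat}.
Implicit Types (N : 'M[R]_n) (y : 'rV[R]_n).

Lemma spectral_radius_ltP N s : nonneg_mx N -> 0 < s ->
  spectral_radius N < s <->
  exists2 y : 'rV[R]_n, (forall j, 0 < y 0 j) & forall j, 0 < (y *m (s%:M - N)) 0 j.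
Proof.
move=> N0 s_gt0; split=> [ltNs | [y y_gt0 ysN_gt0]]; last first.
  apply: (collatz_wielandt_lt N0 y_gt0 s_gt0) => j.
  by rewrite -subr_gt0 -mulmx_subr_scalar_row.
have [sN_unit inv_ge0] := spectral_radius_lt_inv_ge0 N0 ltNs.
pose y := const_mx 1 *m invmx (s%:M - N) : 'rV_n.
have y1 : y *m (s%:M - N) = const_mx 1 by rewrite -mulmxA mulVmx // mulmx1.
exists y => j; last by rewrite y1 mxE.
have yN_ge0 : 0 <= (y *m N) 0 j.
  apply: nonneg_mx_mul (nonneg_mx_mul _ inv_ge0) N0 0 j.
  by move=> ? ?; rewrite mxE.
have := mulmx_subr_scalar_row N s y j; rewrite y1 mxE => ysN.
by rewrite -(pmulr_rgt0 _ s_gt0); lra.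
Qed.

Lemma spectral_radius_le_of_subinvariant {N s y} : nonneg_mx N -> 0 <= s ->
  (forall j, 0 < y 0 j) -> (forall j, 0 <= (y *m (s%:M - N)) 0 j) ->
  spectral_radius N <= s.
Proof.
move=> N0 s_ge0 y_gt0 ysN_ge0.
apply: (collatz_wielandt_le N0 y_gt0 s_ge0) => j.
by rewrite -subr_ge0 -mulmx_subr_scalar_row.
Qed.

Lemma irreducible_subinvariant_spectral_radius_le {N s y} :
  nonneg_mx N -> irreducible_mx N -> 0 <= s ->
  (forall j, 0 <= y 0 j) -> (exists j, 0 < y 0 j) ->
  (forall j, 0 <= (y *m (s%:M - N)) 0 j) ->
  (forall j, 0 < y 0 j) /\ spectral_radius N <= s.
Proof.
move=> N0 N_irr s_ge0 y_ge0 y_neq0 ysN_ge0.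
have y_gt0 : forall j, 0 < y 0 j.
  apply: irreducible_subinvariant_gt0 N0 N_irr y_ge0 y_neq0 _ => j.
  by rewrite -subr_ge0 -mulmx_subr_scalar_row.
by split; last exact: spectral_radius_le_of_subinvariant ysN_ge0.
Qed.

End SubinvariantVectors.

Section Transfer.
Context {R : rcfType} {n : nat}.
Variables (At B : 'M[R]_n) (l : 'rV[R]_n).
Hypotheses (At0 : nonneg_mx At) (B0 : nonneg_mx B) (B_col : no_zero_column B).
Hypotheses (l_gt0 : forall j, 0 < l 0 j) (At_lt1 : spectral_radius At < 1).

Local Notation L := (diag_mx l).
Local Notation X := (invmx (1%:M - At)).
Local Notation M0 := (L *m X *m B).
Local Notation N := (At + B *m L).

Let At_unit : (1%:M - At) \in unitmx.
Proof. exact: (spectral_radius_lt_inv_ge0 At0 At_lt1).1. Qed.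

Let X0 : nonneg_mx X.
Proof. exact: (spectral_radius_lt_inv_ge0 At0 At_lt1).2. Qed.

Lemma row_le_mulmx_inv {y : 'rV[R]_n} :
  (forall j, 0 <= y 0 j) -> forall j, y 0 j <= (y *m X) 0 j.
Proof.
move=> y_ge0 j.
have -> : X = 1%:M + At *m X.
  by apply/eqP; rewrite -subr_eq -{1}[X]mul1mx -mulmxBl mulmxV.
rewrite mulmxDr mulmx1 [E in _ <= E]mxE lerDl mulmxA.
exact: nonneg_mx_mul (nonneg_mx_mul (nonneg_mx_row y_ge0) At0) X0 0 j.
Qed.

Lemma mulmx_diag_row (y : 'rV[R]_n) j : (y *m L) 0 j = y 0 j * l 0 j.
Proof. by rewrite mul_mx_diag mxE. Qed.

Let subr_N : 1%:M - N = (1%:M - At) - B *m L.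
Proof. by rewrite opprD addrA. Qed.

Lemma transfer_to_M0 (y : 'rV[R]_n) :
  (y *m B) *m (1%:M - M0) = y *m (1%:M - N) *m X *m B.
Proof.
rewrite subr_N mulmxBr mulmx1 [in RHS]mulmxBr !mulmxBl.
by rewrite -(mulmxA y (1%:M - At) X) (mulmxV At_unit) mulmx1 !mulmxA.
Qed.

Lemma transfer_to_N (z : 'rV[R]_n) :
  (z *m L *m X) *m (1%:M - N) = z *m (1%:M - M0) *m L.
Proof.
rewrite subr_N mulmxBr -(mulmxA (z *m L) X) (mulVmx At_unit) mulmx1.
by rewrite mulmxBr mulmx1 mulmxBl !mulmxA.
Qed.

Lemma transfer_lt_to_N :
  (exists2 c : 'rV[R]_n, (forall j, 0 < c 0 j) &
                         forall j, 0 < (c *m (1%:M - M0)) 0 j) ->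
  exists2 y : 'rV[R]_n, (forall j, 0 < y 0 j) &
                        forall j, 0 < (y *m (1%:M - N)) 0 j.
Proof.
case=> c c_gt0 cM0_gt0; exists (c *m L *m X) => j.
  have cL_ge0 k : 0 <= (c *m L) 0 k by rewrite mulmx_diag_row mulr_ge0 // ltW.
  by apply: lt_le_trans (row_le_mulmx_inv cL_ge0 j); rewrite mulmx_diag_row mulr_gt0.
by rewrite transfer_to_N mulmx_diag_row mulr_gt0.
Qed.

Lemma transfer_lt_to_M0 :
  (exists2 y : 'rV[R]_n, (forall j, 0 < y 0 j) &
                         forall j, 0 < (y *m (1%:M - N)) 0 j) ->
  exists2 c : 'rV[R]_n, (forall j, 0 < c 0 j) &
                        forall j, 0 < (c *m (1%:M - M0)) 0 j.
Proof.
case=> y y_gt0 yN_gt0; exists (y *m B); first exact: mulmx_row_gt0.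
move=> j; rewrite transfer_to_M0; apply: mulmx_row_gt0 => // k.
exact: lt_le_trans (yN_gt0 k) (row_le_mulmx_inv (fun i => ltW (yN_gt0 i)) k).
Qed.

Lemma transfer_le_to_N {z : 'rV[R]_n} :
  (forall j, 0 <= z 0 j) -> (exists j, 0 < z 0 j) ->
  (forall j, 0 <= (z *m (1%:M - M0)) 0 j) ->
  exists y : 'rV[R]_n, [/\ forall j, 0 <= y 0 j, exists j, 0 < y 0 j &
                          forall j, 0 <= (y *m (1%:M - N)) 0 j].
Proof.
move=> z_ge0 [i zi_gt0] zM0_ge0.
have zL_ge0 k : 0 <= (z *m L) 0 k by rewrite mulmx_diag_row mulr_ge0 // ltW.
exists (z *m L *m X); split=> [j||j].
- exact: le_trans (zL_ge0 j) (row_le_mulmx_inv zL_ge0 j).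
- exists i; apply: lt_le_trans (row_le_mulmx_inv zL_ge0 i).
  by rewrite mulmx_diag_row mulr_gt0.
by rewrite transfer_to_N mulmx_diag_row mulr_ge0 // ltW.
Qed.

Lemma transfer_le_to_M0 {y : 'rV[R]_n} :
  (forall j, 0 < y 0 j) -> (forall j, 0 <= (y *m (1%:M - N)) 0 j) ->
  exists2 c : 'rV[R]_n, (forall j, 0 < c 0 j) &
                        forall j, 0 <= (c *m (1%:M - M0)) 0 j.
Proof.
move=> y_gt0 yN_ge0; exists (y *m B); first exact: mulmx_row_gt0.
move=> j; rewrite transfer_to_M0.
exact: nonneg_mx_mul (nonneg_mx_mul (nonneg_mx_row yN_ge0) X0) B0 0 j.
Qed.

Hypothesis At_irr : irreducible_mx At.

Let L0 : nonneg_mx L.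
Proof. by apply: nonneg_diag_mx => j; exact: ltW. Qed.

Let M00 : nonneg_mx M0.
Proof. exact: nonneg_mx_mul (nonneg_mx_mul L0 X0) B0. Qed.

Let N0 : nonneg_mx N.
Proof. exact: nonneg_mx_add At0 (nonneg_mx_mul B0 L0). Qed.

Let N_irr : irreducible_mx N.
Proof. exact: irreducible_mx_add At_irr (nonneg_mx_mul B0 L0). Qed.

Lemma spectral_radius_M0_lt1 :
  spectral_radius M0 < 1 <-> spectral_radius N < 1.
Proof.
rewrite (spectral_radius_ltP _ _ M00 ltr01) (spectral_radius_ltP _ _ N0 ltr01).
by split; [exact: transfer_lt_to_N | exact: transfer_lt_to_M0].
Qed.

Lemma subinvariant_M0_of_spectral_radius_le1 (i0 : 'I_n) :
  spectral_radius N <= 1 ->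
  exists2 c : 'rV[R]_n, (forall j, 0 < c 0 j) &
                        forall j, 0 <= (c *m (1%:M - M0)) 0 j.
Proof.
move=> leN1; have [y [y_ge0 y_neq0 yN_ge0]] :=
  exists_subinvariant_of_spectral_radius_le i0 N0 ltr01 leN1.
have [y_gt0 _] :=
  irreducible_subinvariant_spectral_radius_le N0 N_irr ler01 y_ge0 y_neq0 yN_ge0.
exact: transfer_le_to_M0 y_gt0 yN_ge0.
Qed.

Lemma subinvariant_M0_lt1 :
  (exists2 c : 'rV[R]_n, (forall j, 0 < c 0 j) &
                         forall j, 0 < (c *m (1%:M - M0)) 0 j) <->
  spectral_radius M0 < 1.
Proof. exact: iff_sym (spectral_radius_ltP _ _ M00 ltr01). Qed.

Lemma spectral_radius_M0_le1 (i0 : 'I_n) :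
  spectral_radius M0 <= 1 <-> spectral_radius N <= 1.
Proof.
split=> [leM01 | leN1].
  have [z [z_ge0 z_neq0 zM0_ge0]] :=
    exists_subinvariant_of_spectral_radius_le i0 M00 ltr01 leM01.
  have [y [y_ge0 y_neq0 yN_ge0]] := transfer_le_to_N z_ge0 z_neq0 zM0_ge0.
  exact: (irreducible_subinvariant_spectral_radius_le
            N0 N_irr ler01 y_ge0 y_neq0 yN_ge0).2.
have [c c_gt0 cM0_ge0] := subinvariant_M0_of_spectral_radius_le1 i0 leN1.
exact: spectral_radius_le_of_subinvariant M00 ler01 c_gt0 cM0_ge0.
Qed.

Lemma subinvariant_M0_le1 (i0 : 'I_n) :
  (exists2 c : 'rV[R]_n, (forall j, 0 < c 0 j) &
                         forall j, 0 <= (c *m (1%:M - M0)) 0 j) <->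
  spectral_radius M0 <= 1.
Proof.
split=> [[c c_gt0 cM0_ge0] | /(spectral_radius_M0_le1 i0)].
  exact: spectral_radius_le_of_subinvariant M00 ler01 c_gt0 cM0_ge0.
exact: subinvariant_M0_of_spectral_radius_le1.
Qed.

End Transfer.

Lemma exists_pos_row_normalized {R : rcfType} {n} (W : 'M[R]_n) (j1 : 'I_n)
    (P : R -> Prop) : (forall a x, 0 < a -> P x -> P (a * x)) ->
  (exists c : 'rV[R]_n, (forall j, 0 < c 0 j) /\ c 0 j1 = 1 /\
                        forall j, P ((c *m W) 0 j)) <->
  exists2 c : 'rV[R]_n, (forall j, 0 < c 0 j) & forall j, P ((c *m W) 0 j).
Proof.
move=> P_scale; split=> [[c [c_gt0 [_ cW]]] | [c c_gt0 cW]]; first by exists c.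
exists ((c 0 j1)^-1 *: c); split=> [j|]; first by rewrite mxE mulr_gt0 ?invr_gt0.
split=> [|j]; first by rewrite mxE mulVf // gt_eqF.
by rewrite -scalemxAl mxE; apply: P_scale; rewrite ?invr_gt0.
Qed.

Theorem mainTheorem3 (R : rcfType) (n : nat) (hn : (1 < n)%N)
  (A K B : 'M[R]_n) (delta : 'rV[R]_n) (l : 'rV[R]_n) :
  nonneg_mx A -> nonneg_mx K -> nonneg_mx B -> no_zero_column B ->
  (forall j, 0 < delta 0 j <= 1) ->
  (forall j, 0 < l 0 j) ->
  let D := K *m diag_mx delta in
  let At := A + D in
  let L := diag_mx l in
  let M0 := L *m invmx (1%:M - At) *m B in
  let j1 : 'I_n := Ordinal (ltnW hn) in
  irreducible_mx At ->
  spectral_radius At < 1 ->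
  ((exists c : 'rV[R]_n, (forall j, 0 < c 0 j) /\ c 0 j1 = 1 /\
       (forall j, 0 < (c *m (1%:M - M0)) 0 j))
    <-> spectral_radius M0 < 1) /\
  (spectral_radius M0 < 1 <-> spectral_radius (At + B *m L) < 1) /\
  ((exists c : 'rV[R]_n, (forall j, 0 < c 0 j) /\ c 0 j1 = 1 /\
       (forall j, 0 <= (c *m (1%:M - M0)) 0 j))
    <-> spectral_radius M0 <= 1) /\
  (spectral_radius M0 <= 1 <-> spectral_radius (At + B *m L) <= 1).
Proof.
move=> A0 K0 B0 B_col delta_in l_gt0 D At L M0 j1 At_irr At_lt1.
(* Of the bounds on delta only its nonnegativity matters. *)
have At0 : nonneg_mx At.
  apply: nonneg_mx_add A0 (nonneg_mx_mul K0 (nonneg_diag_mx _)) => j.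
  by case/andP: (delta_in j) => /ltW.
split; [|split; [|split]].
- apply: iff_trans _ (subinvariant_M0_lt1 At B l At0 B0 l_gt0 At_lt1).
  exact: (exists_pos_row_normalized _ _ (fun x => 0 < x) (fun a x => @mulr_gt0 _ a x)).
- exact: spectral_radius_M0_lt1 At B l At0 B0 B_col l_gt0 At_lt1.
- apply: iff_trans _ (subinvariant_M0_le1 At B l At0 B0 B_col l_gt0 At_lt1 At_irr j1).
  apply: (exists_pos_row_normalized _ _ (fun x => 0 <= x)) => a x a_gt0.
  exact: mulr_ge0 (ltW a_gt0).
- exact: spectral_radius_M0_le1 At B l At0 B0 B_col l_gt0 At_lt1 At_irr j1.
Qed.
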